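(* Let $P$ be the transition matrix of a reversible and ergodic Markov chain on $V$ with stationary distribution $\pi$ and mixing rate $t^*$. For the SRT router model for $P$, with any initial configuration, $$\left|\chi^{(T)}_w-\mu^{(T)}_w\right|\le\frac{6\pi_w}{\pi_{\min}}\,t^*\,\Delta$$ for all $w\in V$ and all $T\ge0$.
   Context: Let $V=\{1,\dots,N\}$ and let $P\in\mathbb{R}_{\ge 0}^{N\times N}$ be an ergodic (irreducible, aperiodic) stochastic matrix (entries may be irrational) with stationary distribution $\pi$; $\pi_{\min}=\min_v\pi_v$; reversible means $\pi_uP_{u,v}=\pi_vP_{v,u}$ for all $u,v$. For $v\in V$ let $\mathcal N(v)=\{u: P_{v,u}>0\}$, $\delta(v)=|\mathcal N(v)|$, $\Delta=\max_v\delta(v)$. Total variation distance $d_{TV}(\xi,\zeta)=\frac12\|\xi-\zeta\|_1$; mixing time $\tau(\varepsilon)=\max_{v}\min\{t\ge0: d_{TV}(P^t_{v,\cdot},\pi)\le\varepsilon\}$; mixing rate $t^*=\tau(1/4)$. A functional-router model consists of functions $\sigma_v:\mathbb{Z}_{\ge0}\to\mathcal N(v)$; write $I_{v,u}[z,z')=|\{j\in\{z,\dots,z'-1\}:\sigma_v(j)=u\}|$ (zero if $z'\le z$). Given $\chi^{(0)}\in\mathbb{Z}_{\ge0}^N$, set $Z^{(t)}_{v,u}=I_{v,u}\big[\sum_{s=0}^{t-1}\chi^{(s)}_v,\sum_{s=0}^{t}\chi^{(s)}_v\big)$, $\chi^{(t+1)}_u=\sum_vZ^{(t)}_{v,u}$,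 $\mu^{(0)}=\chi^{(0)}$, $\mu^{(t)}=\mu^{(0)}P^t$. The SRT router is defined recursively: for $i\ge0$ let $T_i(v)=\{u\in\mathcal N(v): I_{v,u}[0,i)-(i+1)P_{v,u}<0\}$ and let $\sigma_v(i)$ be an element $u\in T_i(v)$ minimizing $(I_{v,u}[0,i)+1)/P_{v,u}$ (ties broken arbitrarily). *)

From Stdlib Require Import Reals Lra Lia Arith List.
Import ListNotations.
Open Scope R_scope.

(* V = {0,...,N-1} (0-based version of {1,...,N}). Matrices are functions nat -> nat -> R,
   only the entries with indices < N matter. *)

Definition Rsum (N : nat) (f : nat -> R) : R :=
  fold_right Rplus 0 (map f (seq 0 N)).

Definition nsum (N : nat) (f : nat -> nat) : nat :=
  fold_right Nat.add 0%nat (map f (seq 0 N)).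

Fixpoint Ppow (N : nat) (P : nat -> nat -> R) (t : nat) (u v : nat) : R :=
  match t with
  | O => if Nat.eqb u v then 1 else 0
  | S t' => Rsum N (fun k => Ppow N P t' u k * P k v)
  end.

Definition stochastic (N : nat) (P : nat -> nat -> R) : Prop :=
  (forall u v, (u < N)%nat -> (v < N)%nat -> 0 <= P u v) /\
  (forall u, (u < N)%nat -> Rsum N (fun v => P u v) = 1).

Definition irreducible (N : nat) (P : nat -> nat -> R) : Prop :=
  forall u v, (u < N)%nat -> (v < N)%nat -> exists t, 0 < Ppow N P t u v.

Definition aperiodic (N : nat) (P : nat -> nat -> R) : Prop :=
  forall v, (v < N)%nat ->
    forall d : nat,
      (forall t, (1 <= t)%nat -> 0 < Ppow N P t v v -> Nat.divide d t) -> d = 1%nat.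

Definition ergodic (N : nat) (P : nat -> nat -> R) : Prop :=
  stochastic N P /\ irreducible N P /\ aperiodic N P.

Definition stationary (N : nat) (P : nat -> nat -> R) (pi : nat -> R) : Prop :=
  (forall v, (v < N)%nat -> 0 <= pi v) /\
  Rsum N pi = 1 /\
  (forall v, (v < N)%nat -> Rsum N (fun u => pi u * P u v) = pi v).

Definition reversible (N : nat) (P : nat -> nat -> R) (pi : nat -> R) : Prop :=
  forall u v, (u < N)%nat -> (v < N)%nat -> pi u * P u v = pi v * P v u.

(* pimin = min_v pi_v (the default pi 0 is itself in the list when N >= 1) *)
Definition pimin (N : nat) (pi : nat -> R) : R :=
  fold_right Rmin (pi 0%nat) (map pi (seq 0 N)).

Definition Rpos_b (x : R) : bool := if Rlt_dec 0 x then true else false.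

Definition delta (N : nat) (P : nat -> nat -> R) (v : nat) : nat :=
  length (filter (fun u => Rpos_b (P v u)) (seq 0 N)).

Definition max_degree (N : nat) (P : nat -> nat -> R) : nat :=
  fold_right Nat.max 0%nat (map (delta N P) (seq 0 N)).

Definition dTV_row (N : nat) (P : nat -> nat -> R) (pi : nat -> R) (v t : nat) : R :=
  / 2 * Rsum N (fun u => Rabs (Ppow N P t v u - pi u)).

(* tau(eps) = max_v min{ t >= 0 : d_TV(P^t_{v,.}, pi) <= eps }, unfolded:
   every v reaches distance <= eps by time tau, and some v has not reached it before tau. *)
Definition is_mixing_time (N : nat) (P : nat -> nat -> R) (pi : nat -> R)
    (eps : R) (tau : nat) : Prop :=
  (forall v, (v < N)%nat -> exists t, (t <= tau)%nat /\ dTV_row N P pi v t <= eps) /\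
  (exists v, (v < N)%nat /\ forall t, (t < tau)%nat -> eps < dTV_row N P pi v t).

Definition is_mixing_rate (N : nat) (P : nat -> nat -> R) (pi : nat -> R) (tstar : nat) : Prop :=
  is_mixing_time N P pi (/ 4) tstar.

Definition Icount (sigma : nat -> nat -> nat) (v u z z' : nat) : nat :=
  length (filter (fun j => Nat.eqb (sigma v j) u) (seq z (z' - z))).

(* state t = (chi^{(t)}, fun v => sum_{s<t} chi^{(s)}_v) *)
Fixpoint router_state (N : nat) (sigma : nat -> nat -> nat) (chi0 : nat -> nat) (t : nat)
  : (nat -> nat) * (nat -> nat) :=
  match t with
  | O => (chi0, fun _ => 0%nat)
  | S t' =>
      let (c, s) := router_state N sigma chi0 t' in
      ((fun u => nsum N (fun v => Icount sigma v u (s v) (s v + c v))),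
       (fun v => (s v + c v)%nat))
  end.

Definition chi_conf (N : nat) (sigma : nat -> nat -> nat) (chi0 : nat -> nat) (t : nat) : nat -> nat :=
  fst (router_state N sigma chi0 t).

Definition mu_dist (N : nat) (P : nat -> nat -> R) (chi0 : nat -> nat) (t w : nat) : R :=
  Rsum N (fun v => INR (chi0 v) * Ppow N P t v w).

Definition in_T (N : nat) (P : nat -> nat -> R) (sigma : nat -> nat -> nat) (v i u : nat) : Prop :=
  (u < N)%nat /\ 0 < P v u /\
  INR (Icount sigma v u 0 i) - INR (S i) * P v u < 0.

Definition is_SRT (N : nat) (P : nat -> nat -> R) (sigma : nat -> nat -> nat) : Prop :=
  forall v i, (v < N)%nat ->
    in_T N P sigma v i (sigma v i) /\
    forall u, in_T N P sigma v i u ->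
      (INR (Icount sigma v (sigma v i) 0 i) + 1) / P v (sigma v i)
        <= (INR (Icount sigma v u 0 i) + 1) / P v u.

From Stdlib Require Import Reals Lra Lia List Psatz Classical_Prop.
Open Scope R_scope.

(** Write [err_t(w) = chi^(t)_w - mu^(t)_w], let [S_t(x)] be the number of tokens
    router [x] has sent before time [t], and let
    [A_t(u) = sum_x (I_{x,u}[0,S_t(x)) - S_t(x) P_{x,u})] be the total discrepancy of
    the edges entering [u].  The proof has three ingredients.
    - Dynamics: [err_(t+1) = err_t P + A_(t+1) - A_t], so by summation by parts
      (Duhamel's formula)
      [err_T(w) = A_T(w) + sum_(s<T) sum_z A_(T-1-s)(z) (P^(s+1)(z,w) - P^s(z,w))].
    - Routing: SRT keeps every edge discrepancy in (-1,1); as the support of a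
      reversible chain is symmetric, [|A_t(u)| <= Delta].
    - Mixing: reversibility turns [|P^(s+1)(z,w) - P^s(z,w)|] into
      [pi_w/pi_z |P^(s+1)(w,z) - P^s(w,z)|], and Dobrushin's contraction with
      [dbar (t^* ) <= 1/2] gives [sum_s ||P^(s+1)(w,.) - P^s(w,.)||_1 <= 4 t^*].
    Together [|err_T(w)| <= Delta + 4 (pi_w/pi_min) t^* Delta <= 6 (pi_w/pi_min) t^* Delta],
    using [t^* >= 1], which holds as soon as there are two states; with a single
    state the routing is exact.  The file develops finite sums, matrix powers and
    the stationary distribution, the contraction and mixing estimates, the SRT
    discrepancy bounds and the error decomposition, and ends with the theorem. *)

Lemma Rsum_S n f : Rsum (S n) f = Rsum n f + f n.
Proof.
  unfold Rsum. rewrite seq_S, map_app, fold_right_app. simpl.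
  generalize (map f (seq 0 n)). intros l. induction l as [|a l IH]; simpl; lra.
Qed.

Lemma nsum_S n f : nsum (S n) f = (nsum n f + f n)%nat.
Proof.
  unfold nsum. rewrite seq_S, map_app, fold_right_app. simpl.
  generalize (map f (seq 0 n)). intros l. induction l; simpl; lia.
Qed.

Lemma INR_nsum n f : INR (nsum n f) = Rsum n (fun i => INR (f i)).
Proof.
  induction n as [|n IH]; [reflexivity|].
  rewrite nsum_S, Rsum_S, plus_INR, IH. reflexivity.
Qed.

Lemma Rsum_ext n f g : (forall i, (i < n)%nat -> f i = g i) -> Rsum n f = Rsum n g.
Proof.
  induction n as [|n IH]; intros H; [reflexivity|].
  rewrite !Rsum_S, IH, (H n); [reflexivity|lia|intros; apply H; lia].
Qed.

Lemma Rsum_plus n f g : Rsum n (fun i => f i + g i) = Rsum n f + Rsum n g.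
Proof. induction n; [unfold Rsum; simpl; lra|]. rewrite !Rsum_S, IHn. lra. Qed.

Lemma Rsum_minus n f g : Rsum n (fun i => f i - g i) = Rsum n f - Rsum n g.
Proof. induction n; [unfold Rsum; simpl; lra|]. rewrite !Rsum_S, IHn. lra. Qed.

Lemma Rsum_scal_l n c f : Rsum n (fun i => c * f i) = c * Rsum n f.
Proof. induction n; [unfold Rsum; simpl; lra|]. rewrite !Rsum_S, IHn. lra. Qed.

Lemma Rsum_scal_r n c f : Rsum n (fun i => f i * c) = Rsum n f * c.
Proof. induction n; [unfold Rsum; simpl; lra|]. rewrite !Rsum_S, IHn. lra. Qed.

Lemma Rsum_const n c : Rsum n (fun _ => c) = INR n * c.
Proof. induction n; [unfold Rsum; simpl; lra|]. rewrite Rsum_S, IHn, S_INR. lra. Qed.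

Lemma Rsum_le n f g : (forall i, (i < n)%nat -> f i <= g i) -> Rsum n f <= Rsum n g.
Proof.
  induction n as [|n IH]; intros H; [unfold Rsum; simpl; lra|].
  rewrite !Rsum_S. apply Rplus_le_compat; [apply IH; intros; apply H|apply H]; lia.
Qed.

Lemma Rsum_nonneg n f : (forall i, (i < n)%nat -> 0 <= f i) -> 0 <= Rsum n f.
Proof.
  intros H. replace 0 with (Rsum n (fun _ => 0)) by (rewrite Rsum_const; lra).
  now apply Rsum_le.
Qed.

Lemma Rsum_abs_le n f : Rabs (Rsum n f) <= Rsum n (fun i => Rabs (f i)).
Proof.
  induction n; [unfold Rsum; simpl; rewrite Rabs_R0; lra|].
  rewrite !Rsum_S. eapply Rle_trans; [apply Rabs_triang|lra].
Qed.

Lemma Rsum_swap n m f :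
  Rsum n (fun i => Rsum m (fun j => f i j)) = Rsum m (fun j => Rsum n (fun i => f i j)).
Proof.
  induction n as [|n IH].
  - rewrite (Rsum_ext m _ (fun _ => 0)) by reflexivity. rewrite Rsum_const.
    unfold Rsum; simpl; lra.
  - rewrite Rsum_S, IH, <- Rsum_plus. apply Rsum_ext. intros. now rewrite Rsum_S.
Qed.

Lemma Rsum_delta_l n k f : (k < n)%nat ->
  Rsum n (fun i => (if Nat.eqb k i then 1 else 0) * f i) = f k.
Proof.
  induction n as [|n IH]; intros Hk; [lia|]. rewrite Rsum_S.
  destruct (Nat.eq_dec k n) as [->|Hne].
  - rewrite Nat.eqb_refl, (Rsum_ext n _ (fun _ => 0)), Rsum_const; [lra|].
    intros i Hi. replace (Nat.eqb n i) with false by (symmetry; apply Nat.eqb_neq; lia). lra.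
  - rewrite IH by lia. replace (Nat.eqb k n) with false by (symmetry; apply Nat.eqb_neq; lia). lra.
Qed.

Lemma Rsum_delta_r n k f : (k < n)%nat ->
  Rsum n (fun i => f i * (if Nat.eqb i k then 1 else 0)) = f k.
Proof.
  intros Hk. rewrite <- (Rsum_delta_l n k f Hk). apply Rsum_ext. intros.
  rewrite Nat.eqb_sym. lra.
Qed.

Lemma Rsum_shift n f : Rsum (S n) f = f 0%nat + Rsum n (fun i => f (S i)).
Proof.
  induction n as [|n IH]; [rewrite Rsum_S; unfold Rsum; simpl; lra|].
  rewrite Rsum_S, IH, Rsum_S. lra.
Qed.

Lemma Rsum_split a b f : Rsum (a + b) f = Rsum a f + Rsum b (fun i => f (a + i)%nat).
Proof.
  induction b as [|b IH]; [rewrite Nat.add_0_r; unfold Rsum at 3; simpl; lra|].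
  rewrite Nat.add_succ_r, !Rsum_S, IH. lra.
Qed.

Lemma Rsum_le_range n m f : (n <= m)%nat -> (forall i, (i < m)%nat -> 0 <= f i) ->
  Rsum n f <= Rsum m f.
Proof.
  intros Hnm H. replace m with (n + (m - n))%nat by lia. rewrite Rsum_split.
  assert (0 <= Rsum (m - n) (fun i => f (n + i)%nat)) by (apply Rsum_nonneg; intros; apply H; lia).
  lra.
Qed.

Lemma Rsum_ge_term n k f : (k < n)%nat -> (forall i, (i < n)%nat -> 0 <= f i) ->
  f k <= Rsum n f.
Proof.
  induction n as [|n IH]; intros Hk H; [lia|]. rewrite Rsum_S.
  destruct (Nat.eq_dec k n) as [->|Hne].
  - assert (0 <= Rsum n f) by (apply Rsum_nonneg; intros; apply H; lia). lra.
  - assert (f k <= Rsum n f) by (apply IH; [lia|intros; apply H; lia]).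
    assert (0 <= f n) by (apply H; lia). lra.
Qed.

Lemma Rsum_indicator N (g : nat -> bool) :
  Rsum N (fun i => if g i then 1 else 0) = INR (length (filter g (seq 0 N))).
Proof.
  unfold Rsum. generalize (seq 0 N). intros l.
  induction l as [|a l IH]; [reflexivity|]. cbn [map fold_right filter]. rewrite IH.
  destruct (g a); cbn [length]; [rewrite S_INR|]; lra.
Qed.

Lemma Rdiv_le_iff a b p : 0 < p -> (a / p <= b <-> a <= b * p).
Proof.
  intros Hp. replace a with (a / p * p) at 2 by (field; lra).
  split; intros H; [apply Rmult_le_compat_r; lra|apply (Rmult_le_reg_r p); lra].
Qed.

Section MatrixPowers.

Variables (N : nat) (P : nat -> nat -> R).

Lemma Ppow_0 u v : Ppow N P 0 u v = if Nat.eqb u v then 1 else 0.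
Proof. reflexivity. Qed.

Lemma Ppow_S t u v : Ppow N P (S t) u v = Rsum N (fun k => Ppow N P t u k * P k v).
Proof. reflexivity. Qed.

Lemma Ppow_S_left t u v : (u < N)%nat -> (v < N)%nat ->
  Ppow N P (S t) u v = Rsum N (fun k => P u k * Ppow N P t k v).
Proof.
  revert v. induction t as [|t IH]; intros v Hu Hv.
  - rewrite Ppow_S. cbn [Ppow]. rewrite Rsum_delta_l, Rsum_delta_r by auto.
    reflexivity.
  - rewrite Ppow_S.
    rewrite (Rsum_ext _ _ (fun k => Rsum N (fun j => P u j * Ppow N P t j k * P k v))).
    2:{ intros k Hk. rewrite IH, <- Rsum_scal_r by auto. reflexivity. }
    rewrite Rsum_swap. apply Rsum_ext. intros j Hj. rewrite Ppow_S.
    rewrite <- Rsum_scal_l. apply Rsum_ext. intros. ring.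
Qed.

Lemma Ppow_add s t x v : (v < N)%nat ->
  Ppow N P (s + t) x v = Rsum N (fun k => Ppow N P s x k * Ppow N P t k v).
Proof.
  revert v. induction t as [|t IH]; intros v Hv.
  - rewrite Nat.add_0_r. cbn [Ppow]. rewrite Rsum_delta_r by auto. reflexivity.
  - rewrite Nat.add_succ_r, Ppow_S.
    rewrite (Rsum_ext _ _ (fun j => Rsum N (fun k => Ppow N P s x k * Ppow N P t k j * P j v))).
    2:{ intros j Hj. rewrite IH, <- Rsum_scal_r by auto. reflexivity. }
    rewrite Rsum_swap. apply Rsum_ext. intros k Hk.
    rewrite Ppow_S, <- Rsum_scal_l. apply Rsum_ext. intros. ring.
Qed.

Hypothesis Hstoch : stochastic N P.

Lemma Ppow_nonneg t u v : (u < N)%nat -> (v < N)%nat -> 0 <= Ppow N P t u v.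
Proof.
  destruct Hstoch as [Hnn _]. revert v. induction t as [|t IH]; intros v Hu Hv.
  - rewrite Ppow_0. destruct (Nat.eqb u v); lra.
  - rewrite Ppow_S. apply Rsum_nonneg. intros. apply Rmult_le_pos; auto.
Qed.

Lemma Ppow_row_sum t u : (u < N)%nat -> Rsum N (fun v => Ppow N P t u v) = 1.
Proof.
  intros Hu. induction t as [|t IH].
  - rewrite <- (Rsum_delta_l N u (fun _ => 1) Hu). apply Rsum_ext. intros.
    rewrite Ppow_0. lra.
  - cbn [Ppow]. rewrite Rsum_swap, <- IH. apply Rsum_ext. intros k Hk.
    rewrite Rsum_scal_l. destruct Hstoch as [_ Hrow]. rewrite Hrow by auto. ring.
Qed.

End MatrixPowers.

Lemma pimin_le N pi w : (w < N)%nat -> pimin N pi <= pi w.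
Proof.
  intros Hw. unfold pimin. assert (Hin : In (pi w) (map pi (seq 0 N))).
  { apply in_map, in_seq. lia. }
  revert Hin. generalize (map pi (seq 0 N)). intros l. induction l as [|a l IH]; simpl; [tauto|].
  intros [<-|Hin]; [apply Rmin_l|]. eapply Rle_trans; [apply Rmin_r|auto].
Qed.

Section Stationary.

Variables (N : nat) (P : nat -> nat -> R) (pi : nat -> R).

Lemma stationary_pow t v : stationary N P pi -> (v < N)%nat ->
  Rsum N (fun u => pi u * Ppow N P t u v) = pi v.
Proof.
  intros Hst. revert v. induction t as [|t IH]; intros v Hv.
  - cbn [Ppow]. rewrite Rsum_delta_r by auto. reflexivity.
  - rewrite (Rsum_ext _ _ (fun u => Rsum N (fun k => pi u * Ppow N P t u k * P k v))).
    2:{ intros. rewrite Ppow_S. rewrite <- Rsum_scal_l. apply Rsum_ext. intros. ring. }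
    rewrite Rsum_swap. destruct Hst as [_ [_ Hfix]]. rewrite <- (Hfix v Hv).
    apply Rsum_ext. intros k Hk. rewrite Rsum_scal_r, IH by auto. reflexivity.
Qed.

(** An irreducible chain charges every state: some state has positive mass,
    and it reaches every other state. *)
Lemma pi_pos v : ergodic N P -> stationary N P pi -> (v < N)%nat -> 0 < pi v.
Proof.
  intros [Hs [Hirr _]] Hst Hv.
  assert (Hex : exists u, (u < N)%nat /\ 0 < pi u).
  { apply NNPP. intros Hno. destruct Hst as [_ [Hone _]].
    assert (Rsum N pi <= Rsum N (fun _ => 0)).
    { apply Rsum_le. intros i Hi. apply Rnot_lt_le. intros Hpos. apply Hno. eauto. }
    rewrite Rsum_const in H. lra. }
  destruct Hex as [u [Hu Hpu]]. destruct (Hirr u v Hu Hv) as [t Ht].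
  rewrite <- (stationary_pow t v Hst Hv).
  eapply Rlt_le_trans; [|apply (Rsum_ge_term N u (fun u => pi u * Ppow N P t u v) Hu)].
  - apply Rmult_lt_0_compat; auto.
  - intros. destruct Hst as [Hnn _]. apply Rmult_le_pos; auto. apply Ppow_nonneg; auto.
Qed.

Lemma pimin_pos : ergodic N P -> stationary N P pi -> (0 < N)%nat -> 0 < pimin N pi.
Proof.
  intros He Hst HN. unfold pimin.
  assert (Hall : forall x, In x (map pi (seq 0 N)) -> 0 < x).
  { intros x Hx. apply in_map_iff in Hx. destruct Hx as [y [<- Hy]].
    apply in_seq in Hy. apply pi_pos; auto. lia. }
  assert (H0 : 0 < pi 0%nat) by (apply pi_pos; auto).
  revert Hall. generalize (map pi (seq 0 N)). intros l. induction l as [|a l IH]; simpl; intros Hall.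
  - exact H0.
  - apply Rmin_glb_lt; auto.
Qed.

Hypothesis Hrev : reversible N P pi.

Lemma reversible_pow t u v : (u < N)%nat -> (v < N)%nat ->
  pi u * Ppow N P t u v = pi v * Ppow N P t v u.
Proof.
  revert u v. induction t as [|t IH]; intros u v Hu Hv.
  - rewrite !Ppow_0. destruct (Nat.eq_dec u v) as [->|Hne]; [reflexivity|].
    rewrite (proj2 (Nat.eqb_neq u v) Hne), (proj2 (Nat.eqb_neq v u)) by auto. lra.
  - rewrite Ppow_S, (Ppow_S_left N P t v u) by auto.
    rewrite <- !Rsum_scal_l. apply Rsum_ext. intros k Hk.
    transitivity ((pi u * Ppow N P t u k) * P k v); [ring|].
    rewrite IH by auto.
    transitivity (Ppow N P t k u * (pi k * P k v)); [ring|].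
    rewrite Hrev by auto. ring.
Qed.

(** With a positive stationary distribution, [P u v > 0] iff [P v u > 0]. *)
Lemma support_symmetric x z : ergodic N P -> stationary N P pi ->
  (x < N)%nat -> (z < N)%nat -> Rpos_b (P x z) = Rpos_b (P z x).
Proof.
  intros He Hst Hx Hz.
  pose proof (pi_pos x He Hst Hx). pose proof (pi_pos z He Hst Hz).
  pose proof (Hrev x z Hx Hz). destruct He as [[Hnn _] _].
  pose proof (Hnn x z Hx Hz). pose proof (Hnn z x Hz Hx).
  unfold Rpos_b. destruct (Rlt_dec 0 (P x z)), (Rlt_dec 0 (P z x)); auto; exfalso; nra.
Qed.

End Stationary.

Section Contraction.

Variable N : nat.

Lemma pos_neg_parts r :
  r = Rmax r 0 - Rmax (-r) 0 /\ Rabs r = Rmax r 0 + Rmax (-r) 0 /\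
  0 <= Rmax r 0 /\ 0 <= Rmax (-r) 0.
Proof.
  unfold Rmax, Rabs. destruct (Rle_dec r 0), (Rle_dec (-r) 0), (Rcase_abs r); lra.
Qed.

(** Writing [nu = a - b] with [a], [b] of equal mass [m] couples every unit of
    positive mass with every unit of negative mass. *)
Lemma coupling_identity (a b : nat -> R) (M : nat -> nat -> R) u :
  Rsum N a = Rsum N b ->
  Rsum N a * Rsum N (fun x => (a x - b x) * M x u) =
  Rsum N (fun x => Rsum N (fun y => a x * b y * (M x u - M y u))).
Proof.
  intros Hm.
  rewrite (Rsum_ext _ (fun x => Rsum N (fun y => a x * b y * (M x u - M y u)))
             (fun x => a x * M x u * Rsum N b - a x * Rsum N (fun y => b y * M y u))).
  2:{ intros x Hx. rewrite <- !Rsum_scal_l, <- Rsum_minus. apply Rsum_ext. intros. ring. }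
  rewrite Rsum_minus, !Rsum_scal_r.
  rewrite (Rsum_ext _ (fun x => (a x - b x) * M x u) (fun x => a x * M x u - b x * M x u))
    by (intros; ring).
  rewrite Rsum_minus, Hm. ring.
Qed.

Lemma coupling_bound (a b : nat -> R) (M : nat -> nat -> R) c :
  (forall x, 0 <= a x) -> (forall y, 0 <= b y) -> Rsum N a = Rsum N b ->
  (forall x y, (x < N)%nat -> (y < N)%nat -> Rsum N (fun u => Rabs (M x u - M y u)) <= 2 * c) ->
  Rsum N a * Rsum N (fun u => Rabs (Rsum N (fun x => (a x - b x) * M x u)))
    <= 2 * c * Rsum N a * Rsum N b.
Proof.
  intros Ha Hb Hm HM.
  assert (Hma : 0 <= Rsum N a) by (apply Rsum_nonneg; auto).
  rewrite <- Rsum_scal_l.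
  rewrite (Rsum_ext _ _ (fun u =>
             Rabs (Rsum N (fun x => Rsum N (fun y => a x * b y * (M x u - M y u)))))).
  2:{ intros u Hu. rewrite <- coupling_identity by auto.
      rewrite Rabs_mult, (Rabs_right (Rsum N a)) by lra. reflexivity. }
  eapply Rle_trans.
  { apply Rsum_le. intros u Hu. eapply Rle_trans; [apply Rsum_abs_le|].
    apply Rsum_le. intros x Hx. apply Rsum_abs_le. }
  rewrite Rsum_swap.
  apply Rle_trans with (Rsum N (fun x => Rsum N (fun y => a x * b y * (2 * c)))).
  - apply Rsum_le. intros x Hx. rewrite Rsum_swap. apply Rsum_le. intros y Hy.
    rewrite (Rsum_ext _ _ (fun u => a x * b y * Rabs (M x u - M y u))).
    + rewrite Rsum_scal_l. apply Rmult_le_compat_l; [apply Rmult_le_pos|apply HM]; auto.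
    + intros. rewrite Rabs_mult, Rabs_right; [reflexivity|]. apply Rle_ge, Rmult_le_pos; auto.
  - rewrite (Rsum_ext _ _ (fun x => a x * (2 * c * Rsum N b))).
    + rewrite Rsum_scal_r. lra.
    + intros. rewrite <- !Rsum_scal_l. apply Rsum_ext. intros. ring.
Qed.

Lemma contraction (M : nat -> nat -> R) (nu : nat -> R) c :
  (forall x y, (x < N)%nat -> (y < N)%nat -> Rsum N (fun u => Rabs (M x u - M y u)) <= 2 * c) ->
  Rsum N nu = 0 ->
  Rsum N (fun u => Rabs (Rsum N (fun x => nu x * M x u)))
    <= c * Rsum N (fun x => Rabs (nu x)).
Proof.
  intros HM Hnu0.
  set (a := fun x => Rmax (nu x) 0). set (b := fun x => Rmax (- nu x) 0).
  assert (Hnu : forall x, nu x = a x - b x) by (intros; apply pos_neg_parts).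
  assert (Habs : forall x, Rabs (nu x) = a x + b x) by (intros; apply pos_neg_parts).
  assert (Ha : forall x, 0 <= a x) by (intros; apply pos_neg_parts).
  assert (Hb : forall x, 0 <= b x) by (intros; apply pos_neg_parts).
  assert (Hm : Rsum N a = Rsum N b).
  { rewrite (Rsum_ext N nu (fun x => a x - b x)), Rsum_minus in Hnu0 by auto. lra. }
  rewrite (Rsum_ext _ (fun x => Rabs (nu x)) (fun x => a x + b x)), Rsum_plus
    by (intros; apply Habs).
  rewrite (Rsum_ext _ _ (fun u => Rabs (Rsum N (fun x => (a x - b x) * M x u)))).
  2:{ intros. f_equal. apply Rsum_ext. intros. now rewrite Hnu. }
  pose proof (coupling_bound a b M c Ha Hb Hm HM) as Hcb.
  assert (Hma : 0 <= Rsum N a) by (apply Rsum_nonneg; auto).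
  destruct (Rle_lt_dec (Rsum N a) 0) as [Hz|Hp].
  -
    assert (Hzero : forall x, (x < N)%nat -> a x - b x = 0).
    { intros x Hx. pose proof (Rsum_ge_term N x a Hx (fun i _ => Ha i)).
      pose proof (Rsum_ge_term N x b Hx (fun i _ => Hb i)). pose proof (Ha x). pose proof (Hb x).
      lra. }
    replace (Rsum N a + Rsum N b) with 0 by lra.
    rewrite (Rsum_ext _ _ (fun _ => 0)), Rsum_const; [lra|].
    intros u Hu. rewrite (Rsum_ext _ _ (fun _ => 0)), Rsum_const, Rmult_0_r, Rabs_R0; [reflexivity|].
    intros x Hx. rewrite Hzero by auto. ring.
  - apply (Rmult_le_reg_l (Rsum N a)); auto. rewrite <- Hm in Hcb |- *. nra.
Qed.

End Contraction.

Definition dbar_le (N : nat) (P : nat -> nat -> R) (s : nat) (c : R) : Prop :=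
  forall x y, (x < N)%nat -> (y < N)%nat ->
    Rsum N (fun u => Rabs (Ppow N P s x u - Ppow N P s y u)) <= 2 * c.

Definition step_change (N : nat) (P : nat -> nat -> R) (w s : nat) : R :=
  Rsum N (fun u => Rabs (Ppow N P (S s) w u - Ppow N P s w u)).

Section Mixing.

Variables (N : nat) (P : nat -> nat -> R) (pi : nat -> R) (tstar : nat).
Hypothesis Hstoch : stochastic N P.
Hypothesis Hstat : stationary N P pi.

Lemma dbar_le_one s : dbar_le N P s 1.
Proof.
  intros x y Hx Hy.
  apply Rle_trans with (Rsum N (fun u => Ppow N P s x u + Ppow N P s y u)).
  - apply Rsum_le. intros u Hu.
    pose proof (Ppow_nonneg N P Hstoch s x u Hx Hu). pose proof (Ppow_nonneg N P Hstoch s y u Hy Hu).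
    unfold Rabs; destruct Rcase_abs; lra.
  - rewrite Rsum_plus, !Ppow_row_sum by auto. lra.
Qed.

Lemma dbar_le_mult s t c1 c2 : dbar_le N P s c1 -> dbar_le N P t c2 ->
  dbar_le N P (s + t) (c1 * c2).
Proof.
  intros H1 H2 x y Hx Hy.
  assert (Hc2 : 0 <= c2).
  { specialize (H2 x x Hx Hx).
    assert (0 <= Rsum N (fun u => Rabs (Ppow N P t x u - Ppow N P t x u)))
      by (apply Rsum_nonneg; intros; apply Rabs_pos). lra. }
  rewrite (Rsum_ext _ _ (fun u => Rabs (Rsum N (fun k =>
             (Ppow N P s x k - Ppow N P s y k) * Ppow N P t k u)))).
  2:{ intros u Hu. rewrite !Ppow_add, <- Rsum_minus by auto. f_equal.
      apply Rsum_ext. intros. ring. }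
  eapply Rle_trans; [apply contraction; [exact H2|]|].
  - rewrite Rsum_minus, !Ppow_row_sum by auto. lra.
  - specialize (H1 x y Hx Hy). nra.
Qed.

Lemma dTV_row_step v t : (v < N)%nat -> dTV_row N P pi v (S t) <= dTV_row N P pi v t.
Proof.
  intros Hv. unfold dTV_row. apply Rmult_le_compat_l; [lra|].
  destruct Hstoch as [Hnn Hrow]. destruct Hstat as [_ [_ Hfix]].
  rewrite (Rsum_ext _ _ (fun u => Rabs (Rsum N (fun k => (Ppow N P t v k - pi k) * P k u)))).
  2:{ intros u Hu. rewrite Ppow_S, <- (Hfix u Hu) at 1. rewrite <- Rsum_minus. f_equal.
      apply Rsum_ext. intros. ring. }
  eapply Rle_trans; [apply Rsum_le; intros u Hu; apply Rsum_abs_le|].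
  rewrite Rsum_swap. apply Rsum_le. intros k Hk.
  rewrite (Rsum_ext _ _ (fun u => Rabs (Ppow N P t v k - pi k) * P k u)).
  - rewrite Rsum_scal_l, Hrow by auto. lra.
  - intros u Hu. rewrite Rabs_mult, (Rabs_right (P k u)); [reflexivity|]. apply Rle_ge; auto.
Qed.

Lemma dTV_row_antitone v t t' : (v < N)%nat -> (t <= t')%nat ->
  dTV_row N P pi v t' <= dTV_row N P pi v t.
Proof.
  intros Hv Hle. induction Hle; [lra|]. eapply Rle_trans; [apply dTV_row_step|]; auto.
Qed.

Hypothesis Hmix : is_mixing_rate N P pi tstar.

(** At the mixing rate every row is within [1/4] of [pi], so any two are within [1/2]. *)
Lemma dbar_le_tstar : dbar_le N P tstar (/ 2).
Proof.
  destruct Hmix as [Hreach _].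
  assert (Hd : forall x, (x < N)%nat -> Rsum N (fun u => Rabs (Ppow N P tstar x u - pi u)) <= / 2).
  { intros x Hx. destruct (Hreach x Hx) as [t [Ht Hd]].
    pose proof (dTV_row_antitone x t tstar Hx Ht). unfold dTV_row in *. lra. }
  intros x y Hx Hy.
  apply Rle_trans with (Rsum N (fun u => Rabs (Ppow N P tstar x u - pi u)
                                          + Rabs (Ppow N P tstar y u - pi u))).
  - apply Rsum_le. intros u Hu.
    replace (Ppow N P tstar x u - Ppow N P tstar y u)
      with ((Ppow N P tstar x u - pi u) - (Ppow N P tstar y u - pi u)) by ring.
    eapply Rle_trans; [apply Rabs_triang|]. rewrite Rabs_Ropp. lra.
  - rewrite Rsum_plus. pose proof (Hd x Hx). pose proof (Hd y Hy). lra.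
Qed.

Lemma dbar_le_geometric k r : dbar_le N P (k * tstar + r) ((/ 2) ^ k).
Proof.
  induction k as [|k IH]; [apply dbar_le_one|].
  replace (S k * tstar + r)%nat with (tstar + (k * tstar + r))%nat by lia.
  apply dbar_le_mult; [apply dbar_le_tstar|exact IH].
Qed.

(** [P^(s+1)(w,.) - P^s(w,.) = sum_x P(w,x) (P^s(x,.) - P^s(w,.))]. *)
Lemma step_change_le_dbar w s c : (w < N)%nat -> dbar_le N P s c -> step_change N P w s <= 2 * c.
Proof.
  intros Hw Hd. destruct Hstoch as [Hnn Hrow]. unfold step_change.
  rewrite (Rsum_ext _ _ (fun u =>
             Rabs (Rsum N (fun x => P w x * (Ppow N P s x u - Ppow N P s w u))))).
  2:{ intros u Hu. rewrite Ppow_S_left by auto. f_equal.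
      rewrite (Rsum_ext _ (fun x => P w x * (Ppow N P s x u - Ppow N P s w u))
               (fun x => P w x * Ppow N P s x u - P w x * Ppow N P s w u)) by (intros; ring).
      rewrite Rsum_minus, Rsum_scal_r, Hrow by auto. ring. }
  eapply Rle_trans; [apply Rsum_le; intros u Hu; apply Rsum_abs_le|].
  rewrite Rsum_swap.
  apply Rle_trans with (Rsum N (fun x => P w x * (2 * c))).
  - apply Rsum_le. intros x Hx.
    rewrite (Rsum_ext _ _ (fun u => P w x * Rabs (Ppow N P s x u - Ppow N P s w u))).
    + rewrite Rsum_scal_l. apply Rmult_le_compat_l; auto.
    + intros u Hu. rewrite Rabs_mult, (Rabs_right (P w x)); [reflexivity|]. apply Rle_ge; auto.
  - rewrite Rsum_scal_r, Hrow by auto. lra.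
Qed.

(** Each block of [t^*] steps contributes at most [2 t^* (1/2)^k]. *)
Lemma step_change_blocks w k : (w < N)%nat ->
  Rsum (k * tstar) (step_change N P w) <= 4 * INR tstar * (1 - (/ 2) ^ k).
Proof.
  intros Hw. induction k as [|k IH]; [unfold Rsum; simpl; lra|].
  replace (S k * tstar)%nat with (k * tstar + tstar)%nat by lia.
  rewrite Rsum_split.
  apply Rle_trans with (4 * INR tstar * (1 - (/ 2) ^ k) + Rsum tstar (fun _ => 2 * (/ 2) ^ k)).
  - apply Rplus_le_compat; [exact IH|]. apply Rsum_le. intros j Hj.
    apply step_change_le_dbar; [exact Hw|apply dbar_le_geometric].
  - rewrite Rsum_const. simpl pow. lra.
Qed.

Lemma step_change_total w n : (w < N)%nat -> (1 <= tstar)%nat ->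
  Rsum n (step_change N P w) <= 4 * INR tstar.
Proof.
  intros Hw Ht.
  apply Rle_trans with (Rsum (n * tstar) (step_change N P w)).
  - apply Rsum_le_range; [nia|]. intros. apply Rsum_nonneg. intros. apply Rabs_pos.
  - eapply Rle_trans; [apply step_change_blocks; exact Hw|].
    assert (0 < (/ 2) ^ n) by (apply pow_lt; lra). pose proof (pos_INR tstar). nra.
Qed.

(** With two or more states the mixing rate is positive: at time 0 the rows of two
    distinct states are at total-variation distance 1 from each other. *)
Lemma mixing_rate_pos : (1 < N)%nat -> (1 <= tstar)%nat.
Proof.
  intros HN. pose proof (dbar_le_tstar 0%nat 1%nat ltac:(lia) ltac:(lia)) as Hd.
  destruct (Nat.le_gt_cases 1 tstar) as [Hpos|Hzero]; [exact Hpos|exfalso].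
  replace tstar with 0%nat in Hd by lia.
  rewrite (Rsum_ext _ _ (fun u => Ppow N P 0 0 u + Ppow N P 0 1 u)) in Hd.
  - rewrite Rsum_plus, !Ppow_row_sum in Hd by (auto; lia). lra.
  - intros u Hu. rewrite !Ppow_0.
    destruct (Nat.eqb_spec 0 u), (Nat.eqb_spec 1 u); [lia| | |];
      unfold Rabs; destruct Rcase_abs; lra.
Qed.

End Mixing.

Lemma Icount_S sigma v u i :
  Icount sigma v u 0 (S i) = (Icount sigma v u 0 i + if Nat.eqb (sigma v i) u then 1 else 0)%nat.
Proof.
  unfold Icount. rewrite !Nat.sub_0_r, seq_S, filter_app, length_app. simpl.
  destruct (Nat.eqb (sigma v i) u); simpl; lia.
Qed.

Lemma Icount_split sigma v u a b : (a <= b)%nat ->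
  (Icount sigma v u a b + Icount sigma v u 0 a)%nat = Icount sigma v u 0 b.
Proof.
  intros Hab. unfold Icount. rewrite !Nat.sub_0_r.
  replace (seq 0 b) with (seq 0 a ++ seq a (b - a)).
  - rewrite filter_app, length_app. lia.
  - rewrite <- seq_app. f_equal. lia.
Qed.

Lemma Icount_mono sigma v u a b : (a <= b)%nat ->
  (Icount sigma v u 0 a <= Icount sigma v u 0 b)%nat.
Proof. intros Hab. rewrite <- (Icount_split sigma v u a b Hab). lia. Qed.

Lemma Icount_total N sigma v i : (forall j, (sigma v j < N)%nat) ->
  Rsum N (fun u => INR (Icount sigma v u 0 i)) = INR i.
Proof.
  intros Hrange. induction i as [|i IH].
  - rewrite (Rsum_ext _ _ (fun _ => 0)), Rsum_const by reflexivity. simpl. lra.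
  - rewrite (Rsum_ext _ _ (fun u => INR (Icount sigma v u 0 i)
                                    + (if Nat.eqb (sigma v i) u then 1 else 0) * 1)).
    + rewrite Rsum_plus, IH, Rsum_delta_l, S_INR by auto. lra.
    + intros u Hu. rewrite Icount_S, plus_INR. destruct (Nat.eqb (sigma v i) u); simpl; lra.
Qed.

Lemma Icount_never sigma v u a b : (forall j, sigma v j <> u) -> Icount sigma v u a b = 0%nat.
Proof.
  intros Hnever. unfold Icount. generalize (b - a)%nat as n. intros n. revert a.
  induction n as [|n IH]; intros a; [reflexivity|]. simpl.
  rewrite (proj2 (Nat.eqb_neq _ _) (Hnever a)). apply IH.
Qed.

Lemma Icount_always sigma v u a b : (forall j, sigma v j = u) -> Icount sigma v u a b = (b - a)%nat.
Proof.
  intros Halways. unfold Icount. generalize (b - a)%nat as n. intros n. revert a.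
  induction n as [|n IH]; intros a; [reflexivity|]. simpl.
  rewrite Halways, Nat.eqb_refl. simpl. now rewrite IH.
Qed.

Lemma last_failure (Q : nat -> Prop) (dec : forall j, Q j \/ ~ Q j) z :
  (forall j, (j < z)%nat -> Q j) \/
  exists s0, (s0 < z)%nat /\ ~ Q s0 /\ forall j, (s0 < j < z)%nat -> Q j.
Proof.
  induction z as [|z IH]; [left; intros; lia|].
  destruct (dec z) as [Hz|Hz].
  - destruct IH as [Hall|[s0 [Hs0 [Hfail Htail]]]].
    + left. intros j Hj. destruct (Nat.eq_dec j z) as [->|]; [exact Hz|apply Hall; lia].
    + right. exists s0. repeat split; [lia|exact Hfail|].
      intros j Hj. destruct (Nat.eq_dec j z) as [->|]; [exact Hz|apply Htail; lia].
  - right. exists z. repeat split; [lia|exact Hz|]. intros; lia.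
Qed.

(** The SRT router keeps every edge discrepancy [I_{v,u}[0,z) - z P_{v,u}] in [(-1, 1)].
    The upper bound is built into the definition; the lower bound is the heart of
    the matter: an edge that falls behind by one token has the smallest priority
    [(I+1)/P] and is served first. *)
Section SRTDiscrepancy.

Variables (N : nat) (P : nat -> nat -> R) (sigma : nat -> nat -> nat) (v : nat).
Hypothesis Hstoch : stochastic N P.
Hypothesis Hsrt : is_SRT N P sigma.
Hypothesis Hv : (v < N)%nat.

Local Notation count u i := (Icount sigma v u 0 i).
(** Priority of the neighbour chosen at step [j]: the time by which it is owed its next token. *)
Local Notation priority j := ((INR (count (sigma v j) j) + 1) / P v (sigma v j)).

Lemma SRT_choice_valid j : (sigma v j < N)%nat /\ 0 < P v (sigma v j).
Proof. destruct (Hsrt v j Hv) as [[H1 [H2 _]] _]. auto. Qed.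

Lemma SRT_unused u a b : P v u <= 0 -> Icount sigma v u a b = 0%nat.
Proof.
  intros Hp. apply Icount_never. intros j <-. pose proof (proj2 (SRT_choice_valid j)). lra.
Qed.

Lemma SRT_count_total i : Rsum N (fun u => INR (count u i)) = INR i.
Proof. apply Icount_total. intros j. apply SRT_choice_valid. Qed.

(** A neighbour is served at step [i] only if it belongs to [T_i(v)], i.e. is strictly
    behind its fair share [(i+1) P_{v,u}]. *)
Lemma SRT_count_upper u i : (u < N)%nat -> INR (count u i) < INR i * P v u + 1.
Proof.
  intros Hu. pose proof (proj1 Hstoch v u Hv Hu) as Hp.
  induction i as [|i IH]; [simpl; lra|].
  rewrite Icount_S, plus_INR, S_INR. destruct (Nat.eqb_spec (sigma v i) u) as [<-|Hne].
  - destruct (Hsrt v i Hv) as [[_ [_ HT]] _]. rewrite S_INR in HT. simpl INR. lra.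
  - simpl INR. lra.
Qed.

Lemma priority_tail tau j0 z : (j0 <= z)%nat ->
  (forall j, (j0 <= j < z)%nat -> priority j <= tau) ->
  forall u', (count u' z <= count u' j0)%nat \/ INR (count u' z) <= tau * P v u'.
Proof.
  intros Hj0 Hprio u'. induction z as [|z IH].
  - left. replace j0 with 0%nat by lia. lia.
  - destruct (Nat.eq_dec j0 (S z)) as [->|Hne]; [left; lia|].
    rewrite Icount_S. destruct (Nat.eqb_spec (sigma v z) u') as [<-|Hnot].
    + right. pose proof (Hprio z ltac:(lia)) as Hz. pose proof (proj2 (SRT_choice_valid z)).
      apply Rdiv_le_iff in Hz; [|lra]. rewrite plus_INR. simpl INR. lra.
    + rewrite Nat.add_0_r. apply IH; [lia|]. intros j Hj. apply Hprio. lia.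
Qed.

Lemma blocked_step tau s0 u' : (u' < N)%nat -> tau < priority s0 ->
  tau * P v u' < INR (count u' s0) + 1 \/ INR (S s0) * P v u' <= INR (count u' s0).
Proof.
  intros Hu' Hblock. destruct (Hsrt v s0 Hv) as [_ Hmin].
  destruct (classic (in_T N P sigma v s0 u')) as [HT|HT].
  - left. pose proof (Hmin u' HT) as Hle. destruct HT as [_ [Hp _]].
    apply Rnot_le_lt. intros Hbad.
    apply <- (Rdiv_le_iff (INR (count u' s0) + 1) tau _ Hp) in Hbad. lra.
  - right. apply Rnot_lt_le. intros Hlt. apply HT. unfold in_T. repeat split; [exact Hu'| |lra].
    apply Rnot_le_lt. intros Hp. rewrite SRT_unused in Hlt by exact Hp.
    pose proof (pos_INR (S s0)). change (INR 0) with 0 in Hlt. nra.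
Qed.

(** Neighbours together receive exactly [z - j0] tokens in [[j0, z)], and the
    probabilities [P_{v,.}] sum to one. *)
Lemma window_bound j0 z tau : (j0 <= z)%nat ->
  (forall u', (u' < N)%nat -> INR (count u' z) - INR (count u' j0) <= (tau - INR j0) * P v u') ->
  INR z <= tau.
Proof.
  intros Hj0 Hinc. destruct Hstoch as [_ Hrow].
  assert (Hsum : Rsum N (fun u' => INR (count u' z) - INR (count u' j0))
                 <= Rsum N (fun u' => (tau - INR j0) * P v u')) by (apply Rsum_le; exact Hinc).
  rewrite Rsum_minus, !SRT_count_total, Rsum_scal_l in Hsum.
  change (Rsum N (P v)) with (Rsum N (fun u => P v u)) in Hsum. rewrite (Hrow v Hv) in Hsum. lra.
Qed.

Lemma window_increment tau s0 z u' : (S s0 <= z)%nat -> (u' < N)%nat ->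
  INR (S s0) <= tau -> tau < priority s0 ->
  (forall j, (S s0 <= j < z)%nat -> priority j <= tau) ->
  INR (count u' z) - INR (count u' (S s0)) <= (tau - INR (S s0)) * P v u'.
Proof.
  intros Hz Hu' Hs0 Hblock Htail.
  pose proof (proj1 Hstoch v u' Hv Hu') as Hp.
  pose proof (le_INR _ _ (Icount_mono sigma v u' s0 (S s0) ltac:(lia))) as Hstep.
  assert (Hnonneg : 0 <= (tau - INR (S s0)) * P v u') by nra.
  destruct (priority_tail tau (S s0) z Hz Htail u') as [Hstay|Hcap].
  - apply le_INR in Hstay. lra.
  - destruct (blocked_step tau s0 u' Hu' Hblock) as [Howed|Hahead]; [|lra].
    assert (Hlt : INR (count u' z) < INR (count u' (S s0) + 1)) by (rewrite plus_INR; simpl; lra).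
    apply INR_lt in Hlt.
    assert (Hle : (count u' z <= count u' (S s0))%nat) by lia. apply le_INR in Hle. lra.
Qed.

Lemma SRT_count_lower u z : (u < N)%nat -> INR z * P v u - 1 <= INR (count u z).
Proof.
  intros Hu. apply Rnot_lt_le. intros Hbehind.
  set (k := count u z) in Hbehind.
  pose proof (proj1 Hstoch v u Hv Hu) as Hp0.
  pose proof (pos_INR k) as Hk. pose proof (pos_INR z) as Hz.
  assert (Hp : 0 < P v u) by nra.
  set (tau := (INR k + 1) / P v u).
  assert (Htau : tau * P v u = INR k + 1) by (unfold tau; field; lra).
  assert (Htau_pos : 0 < tau) by (unfold tau; apply Rdiv_lt_0_compat; lra).
  assert (Htau_z : tau < INR z) by nra.
  destruct (last_failure (fun j => priority j <= tau) (fun j => classic _) z)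
    as [Hall|[s0 [Hs0 [Hfail Htail]]]].
  - (* all priorities are at most [tau]: nobody gets more than [tau P_{v,u'}] tokens *)
    assert (INR z <= tau); [|lra].
    apply (window_bound 0 z); [lia|]. intros u' Hu'.
    pose proof (proj1 Hstoch v u' Hv Hu') as Hp'.
    destruct (priority_tail tau 0 z ltac:(lia) (fun j Hj => Hall j ltac:(lia)) u') as [Hzero|Hcap].
    + change (count u' 0) with 0%nat in *. replace (count u' z) with 0%nat by lia.
      change (INR 0) with 0. nra.
    + change (count u' 0) with 0%nat. change (INR 0) with 0. lra.
  - (* [u] was not owed a token at the last blocked step [s0], so [S s0 < tau] *)
    apply Rnot_le_lt in Hfail.
    assert (Hks0 : INR (count u s0) <= INR k)
      by (apply le_INR, Icount_mono; lia).
    assert (Hu_ahead : INR (S s0) * P v u <= INR (count u s0)).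
    { destruct (blocked_step tau s0 u Hu Hfail) as [Howed|Hahead]; [lra|exact Hahead]. }
    assert (Hs0_tau : INR (S s0) <= tau) by (apply (Rmult_le_reg_r (P v u)); lra).
    assert (INR z <= tau); [|lra].
    apply (window_bound (S s0) z); [lia|]. intros u' Hu'.
    apply window_increment; auto; lia.
Qed.

End SRTDiscrepancy.

Lemma duhamel N P (h r : nat -> nat -> R) :
  (forall w, (w < N)%nat -> h 0%nat w = 0) ->
  (forall t w, (w < N)%nat -> h (S t) w = Rsum N (fun v => h t v * P v w) + r t w) ->
  forall T w, (w < N)%nat ->
  h T w = Rsum T (fun s => Rsum N (fun x => r (T - 1 - s)%nat x * Ppow N P s x w)).
Proof.
  intros H0 HS T. induction T as [|T IH]; intros w Hw; [rewrite H0 by auto; reflexivity|].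
  rewrite HS, Rsum_shift by auto.
  replace (S T - 1 - 0)%nat with T by lia. cbn [Ppow]. rewrite Rsum_delta_r, Rplus_comm by auto.
  f_equal.
  rewrite (Rsum_ext N (fun v => h T v * P v w)
    (fun v => Rsum T (fun s => Rsum N (fun x => r (T - 1 - s)%nat x * Ppow N P s x v * P v w)))).
  2:{ intros v Hv. rewrite IH, <- Rsum_scal_r by auto. apply Rsum_ext. intros.
      rewrite <- Rsum_scal_r. reflexivity. }
  rewrite Rsum_swap. apply Rsum_ext. intros s Hs.
  replace (S T - 1 - S s)%nat with (T - 1 - s)%nat by lia.
  rewrite Rsum_swap. apply Rsum_ext. intros x Hx. rewrite <- Rsum_scal_l.
  apply Rsum_ext. intros. ring.
Qed.

Lemma propagate_defect N P (g : nat -> R) s w : (w < N)%nat ->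
  Rsum N (fun x => (Rsum N (fun y => g y * P y x) - g x) * Ppow N P s x w) =
  Rsum N (fun z => g z * (Ppow N P (S s) z w - Ppow N P s z w)).
Proof.
  intros Hw.
  rewrite (Rsum_ext _ _ (fun x =>
             Rsum N (fun y => g y * P y x * Ppow N P s x w) - g x * Ppow N P s x w)).
  2:{ intros. rewrite Rsum_scal_r. ring. }
  rewrite Rsum_minus, Rsum_swap.
  rewrite (Rsum_ext _ (fun z => g z * (Ppow N P (S s) z w - Ppow N P s z w))
             (fun z => g z * Ppow N P (S s) z w - g z * Ppow N P s z w))
    by (intros; ring).
  rewrite Rsum_minus. f_equal. apply Rsum_ext. intros z Hz.
  rewrite Ppow_S_left, <- Rsum_scal_l by auto. apply Rsum_ext. intros. ring.
Qed.

(** [sent t v = sum_(s<t) chi^(s)_v]: the tokens router [v] has dispatched before time [t]. *)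
Definition sent (N : nat) (sigma : nat -> nat -> nat) (chi0 : nat -> nat) (t v : nat) : nat :=
  snd (router_state N sigma chi0 t) v.

Definition edge_discrepancy (P : nat -> nat -> R) (sigma : nat -> nat -> nat) (v u z : nat) : R :=
  INR (Icount sigma v u 0 z) - INR z * P v u.

Definition inflow_discrepancy N P sigma chi0 (t u : nat) : R :=
  Rsum N (fun x => edge_discrepancy P sigma x u (sent N sigma chi0 t x)).

Definition router_error N P sigma chi0 (t w : nat) : R :=
  INR (chi_conf N sigma chi0 t w) - mu_dist N P chi0 t w.

Lemma chi_conf_S N sigma chi0 t u : chi_conf N sigma chi0 (S t) u =
  nsum N (fun v => Icount sigma v u (sent N sigma chi0 t v)
                     (sent N sigma chi0 t v + chi_conf N sigma chi0 t v)).
Proof. unfold chi_conf, sent. simpl. destruct (router_state N sigma chi0 t). reflexivity. Qed.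

Lemma sent_S N sigma chi0 t v :
  sent N sigma chi0 (S t) v = (sent N sigma chi0 t v + chi_conf N sigma chi0 t v)%nat.
Proof. unfold chi_conf, sent. simpl. destruct (router_state N sigma chi0 t). reflexivity. Qed.

Section RouterError.

Variables (N : nat) (P : nat -> nat -> R) (sigma : nat -> nat -> nat) (chi0 : nat -> nat).

Local Notation A := (inflow_discrepancy N P sigma chi0).
Local Notation err := (router_error N P sigma chi0).

Lemma router_error_step t w : (w < N)%nat ->
  err (S t) w = Rsum N (fun v => err t v * P v w) + (A (S t) w - A t w).
Proof.
  intros Hw. unfold router_error, inflow_discrepancy.
  rewrite chi_conf_S, INR_nsum, <- Rsum_minus.
  rewrite (Rsum_ext _ (fun v => INR (Icount sigma v w _ _))
            (fun v => (edge_discrepancy P sigma v w (sent N sigma chi0 (S t) v)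
                       - edge_discrepancy P sigma v w (sent N sigma chi0 t v))
                      + INR (chi_conf N sigma chi0 t v) * P v w)).
  2:{ intros v Hv. unfold edge_discrepancy. rewrite sent_S.
      rewrite <- (Icount_split sigma v w (sent N sigma chi0 t v)
                   (sent N sigma chi0 t v + chi_conf N sigma chi0 t v)) by lia.
      rewrite !plus_INR. ring. }
  rewrite Rsum_plus.
  assert (Hmu : mu_dist N P chi0 (S t) w = Rsum N (fun v => mu_dist N P chi0 t v * P v w)).
  { unfold mu_dist.
    rewrite (Rsum_ext _ _ (fun v => Rsum N (fun k => INR (chi0 v) * Ppow N P t v k * P k w))).
    - rewrite Rsum_swap. apply Rsum_ext. intros. rewrite Rsum_scal_r. reflexivity.
    - intros. rewrite Ppow_S, <- Rsum_scal_l. apply Rsum_ext. intros. ring. }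
  rewrite Hmu.
  rewrite (Rsum_ext N (fun v => (INR (chi_conf N sigma chi0 t v) - mu_dist N P chi0 t v) * P v w)
            (fun v => INR (chi_conf N sigma chi0 t v) * P v w - mu_dist N P chi0 t v * P v w))
    by (intros; ring).
  rewrite !Rsum_minus. ring.
Qed.

Lemma router_error_0 w : (w < N)%nat -> err 0%nat w = 0.
Proof.
  intros Hw. unfold router_error, mu_dist. cbn [Ppow]. rewrite Rsum_delta_r by auto.
  unfold chi_conf. simpl. ring.
Qed.

Lemma inflow_discrepancy_0 w : A 0%nat w = 0.
Proof.
  unfold inflow_discrepancy, edge_discrepancy, sent. simpl.
  rewrite (Rsum_ext _ _ (fun _ => 0)), Rsum_const by (intros; simpl; ring). ring.
Qed.

Lemma router_error_decomposition T w : (w < N)%nat ->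
  err T w = A T w + Rsum T (fun s => Rsum N (fun z =>
      A (T - 1 - s)%nat z * (Ppow N P (S s) z w - Ppow N P s z w))).
Proof.
  intros Hw.
  assert (Hrest : err T w - A T w = Rsum T (fun s => Rsum N (fun x =>
      (Rsum N (fun y => A (T - 1 - s)%nat y * P y x) - A (T - 1 - s)%nat x) * Ppow N P s x w))).
  { apply (duhamel N P (fun t w => err t w - A t w)
                       (fun t x => Rsum N (fun y => A t y * P y x) - A t x)); auto.
    - intros u Hu. rewrite router_error_0, inflow_discrepancy_0 by auto. ring.
    - intros t u Hu. rewrite router_error_step by auto.
      rewrite (Rsum_ext N (fun v => (err t v - A t v) * P v u)
                 (fun v => err t v * P v u - A t v * P v u)) by (intros; ring).
      rewrite Rsum_minus. ring. }
  rewrite <- (Rsum_ext T (fun s => Rsum N (fun x =>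
      (Rsum N (fun y => A (T - 1 - s)%nat y * P y x) - A (T - 1 - s)%nat x) * Ppow N P s x w))).
  - lra.
  - intros s Hs. apply propagate_defect. exact Hw.
Qed.

End RouterError.

Lemma delta_le_max_degree N P u : (u < N)%nat -> (delta N P u <= max_degree N P)%nat.
Proof.
  intros Hu. unfold max_degree.
  assert (Hin : In (delta N P u) (map (delta N P) (seq 0 N))) by (apply in_map, in_seq; lia).
  revert Hin. generalize (map (delta N P) (seq 0 N)). intros l.
  induction l as [|a l IH]; simpl; [tauto|]. intros [<-|Hin]; [lia|]. specialize (IH Hin). lia.
Qed.

Section ErrorBound.

Variables (N : nat) (P : nat -> nat -> R) (pi : nat -> R).
Variables (sigma : nat -> nat -> nat) (chi0 : nat -> nat).
Hypothesis Herg : ergodic N P.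
Hypothesis Hstat : stationary N P pi.
Hypothesis Hrev : reversible N P pi.
Hypothesis Hsrt : is_SRT N P sigma.

Let Hstoch : stochastic N P := proj1 Herg.

Lemma edge_discrepancy_bound v u z : (v < N)%nat -> (u < N)%nat ->
  Rabs (edge_discrepancy P sigma v u z) <= if Rpos_b (P v u) then 1 else 0.
Proof.
  intros Hv Hu. unfold edge_discrepancy, Rpos_b.
  destruct (Rlt_dec 0 (P v u)) as [Hp|Hp].
  - pose proof (SRT_count_upper N P sigma v Hstoch Hsrt Hv u z Hu).
    pose proof (SRT_count_lower N P sigma v Hstoch Hsrt Hv u z Hu).
    unfold Rabs; destruct Rcase_abs; lra.
  - assert (Hzero : P v u = 0) by (pose proof (proj1 Hstoch v u Hv Hu); lra).
    rewrite (SRT_unused N P sigma v Hsrt Hv u 0 z) by lra. rewrite Hzero.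
    simpl. rewrite Rmult_0_r, Rminus_0_r, Rabs_R0. lra.
Qed.

(** The edges entering [u] with nonzero probability are the reverses of the
    [delta u <= Delta] edges leaving [u]. *)
Lemma inflow_discrepancy_bound t u : (u < N)%nat ->
  Rabs (inflow_discrepancy N P sigma chi0 t u) <= INR (max_degree N P).
Proof.
  intros Hu. unfold inflow_discrepancy. eapply Rle_trans; [apply Rsum_abs_le|].
  apply Rle_trans with (Rsum N (fun x => if Rpos_b (P u x) then 1 else 0)).
  - apply Rsum_le. intros x Hx. rewrite <- (support_symmetric N P pi Hrev x u) by auto.
    apply edge_discrepancy_bound; auto.
  - unfold delta in *. rewrite Rsum_indicator. apply le_INR, delta_le_max_degree. exact Hu.
Qed.

(** Reversibility turns the column increments of [P^s] into row increments,
    at the price of the factor [pi_w / pi_min]. *)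
Lemma reversed_increment s z w : (z < N)%nat -> (w < N)%nat ->
  Rabs (Ppow N P (S s) z w - Ppow N P s z w)
    <= pi w / pimin N pi * Rabs (Ppow N P (S s) w z - Ppow N P s w z).
Proof.
  intros Hz Hw.
  pose proof (pi_pos N P pi z Herg Hstat Hz) as Hpz. pose proof (pi_pos N P pi w Herg Hstat Hw).
  pose proof (pimin_pos N P pi Herg Hstat ltac:(lia)). pose proof (pimin_le N pi z Hz).
  assert (Hrow : forall t, Ppow N P t z w = pi w / pi z * Ppow N P t w z).
  { intros t. pose proof (reversible_pow N P pi Hrev t z w Hz Hw). field_simplify_eq; lra. }
  rewrite !Hrow, <- Rmult_minus_distr_l, Rabs_mult, (Rabs_right (pi w / pi z)).
  - apply Rmult_le_compat_r; [apply Rabs_pos|]. unfold Rdiv.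
    apply Rmult_le_compat_l; [lra|]. apply Rinv_le_contravar; lra.
  - apply Rle_ge, Rlt_le, Rdiv_lt_0_compat; lra.
Qed.

Lemma router_error_bound T w : (w < N)%nat ->
  Rabs (router_error N P sigma chi0 T w)
    <= INR (max_degree N P)
       + INR (max_degree N P) * (pi w / pimin N pi) * Rsum T (step_change N P w).
Proof.
  intros Hw. rewrite router_error_decomposition by exact Hw.
  eapply Rle_trans; [apply Rabs_triang|]. apply Rplus_le_compat.
  { apply inflow_discrepancy_bound. exact Hw. }
  eapply Rle_trans; [apply Rsum_abs_le|]. rewrite <- Rsum_scal_l. apply Rsum_le. intros s Hs.
  eapply Rle_trans; [apply Rsum_abs_le|]. unfold step_change. rewrite <- Rsum_scal_l.
  apply Rsum_le. intros z Hz. rewrite Rabs_mult.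
  pose proof (inflow_discrepancy_bound (T - 1 - s) z Hz) as HA.
  pose proof (reversed_increment s z w Hz Hw) as Hinc.
  pose proof (Rabs_pos (inflow_discrepancy N P sigma chi0 (T - 1 - s) z)).
  pose proof (Rabs_pos (Ppow N P (S s) z w - Ppow N P s z w)).
  pose proof (pi_pos N P pi w Herg Hstat Hw). pose proof (pimin_pos N P pi Herg Hstat ltac:(lia)).
  rewrite Rmult_assoc. apply Rmult_le_compat; auto.
Qed.

(** Once [t^* >= 1]: [|err| <= Delta + 4 q t^* Delta <= 6 q t^* Delta], [q = pi_w / pi_min >= 1]. *)
Lemma router_error_mixing_bound tstar T w : is_mixing_rate N P pi tstar ->
  (1 <= tstar)%nat -> (w < N)%nat ->
  Rabs (router_error N P sigma chi0 T w)
    <= 6 * pi w / pimin N pi * INR tstar * INR (max_degree N P).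
Proof.
  intros Hmix Ht Hw.
  pose proof (step_change_total N P pi tstar Hstoch Hstat Hmix w T Hw Ht) as Hsum.
  pose proof (router_error_bound T w Hw) as Hbound.
  pose proof (pi_pos N P pi w Herg Hstat Hw). pose proof (pimin_le N pi w Hw).
  pose proof (pimin_pos N P pi Herg Hstat ltac:(lia)).
  apply le_INR in Ht. simpl INR in Ht. pose proof (pos_INR (max_degree N P)).
  set (q := pi w / pimin N pi) in Hbound.
  replace (6 * pi w / pimin N pi) with (6 * q) by (unfold q, Rdiv; ring).
  assert (Hq : 1 <= q).
  { unfold q, Rdiv. apply (Rmult_le_reg_r (pimin N pi)); [lra|].
    rewrite Rmult_assoc, Rinv_l; lra. }
  assert (INR (max_degree N P) * q * Rsum T (step_change N P w)
          <= INR (max_degree N P) * q * (4 * INR tstar)) by (apply Rmult_le_compat_l; nra).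
  assert (1 <= q * INR tstar) by nra.
  nra.
Qed.

End ErrorBound.

(** With a single state every token stays put, so routing is exact. *)
Lemma single_state_exact P sigma chi0 T : stochastic 1 P -> is_SRT 1 P sigma ->
  router_error 1 P sigma chi0 T 0 = 0.
Proof.
  intros Hstoch Hsrt.
  assert (HP : P 0%nat 0%nat = 1).
  { pose proof (proj2 Hstoch 0%nat ltac:(lia)) as Hrow. rewrite Rsum_S in Hrow.
    unfold Rsum in Hrow. simpl in Hrow. lra. }
  assert (Hsigma : forall j, sigma 0%nat j = 0%nat).
  { intros j. pose proof (proj1 (SRT_choice_valid 1 P sigma 0 Hsrt ltac:(lia) j)). lia. }
  assert (HA : forall t, inflow_discrepancy 1 P sigma chi0 t 0 = 0).
  { intros t. unfold inflow_discrepancy, edge_discrepancy. rewrite Rsum_S, HP, Icount_always by auto.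
    unfold Rsum. simpl. rewrite Nat.sub_0_r. lra. }
  rewrite router_error_decomposition, HA by lia.
  rewrite (Rsum_ext _ _ (fun _ => 0)), Rsum_const; [lra|].
  intros s Hs. rewrite Rsum_S. unfold Rsum. simpl. rewrite HA. lra.
Qed.

Theorem theorem3p2 (N : nat) (P : nat -> nat -> R) (pi : nat -> R) (tstar : nat)
  (sigma : nat -> nat -> nat) (chi0 : nat -> nat) :
  ergodic N P ->
  stationary N P pi ->
  reversible N P pi ->
  is_mixing_rate N P pi tstar ->
  is_SRT N P sigma ->
  forall (w T : nat), (w < N)%nat ->
    Rabs (INR (chi_conf N sigma chi0 T w) - mu_dist N P chi0 T w)
      <= 6 * pi w / pimin N pi * INR tstar * INR (max_degree N P).
Proof.
  intros Herg Hstat Hrev Hmix Hsrt w T Hw.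
  fold (router_error N P sigma chi0 T w).
  destruct (Nat.le_gt_cases N 1) as [Hsmall|Hlarge].
  - (* one state: the routing is exact and the bound is nonnegative *)
    pose proof (pi_pos N P pi w Herg Hstat Hw).
    pose proof (pimin_pos N P pi Herg Hstat ltac:(lia)).
    pose proof (pos_INR tstar). pose proof (pos_INR (max_degree N P)).
    replace N with 1%nat in * by lia. replace w with 0%nat in * by lia.
    rewrite single_state_exact, Rabs_R0 by (apply Herg || exact Hsrt).
    apply Rmult_le_pos; [apply Rmult_le_pos; [apply Rle_mult_inv_pos|]|]; lra.
  - (* two or more states: [t^* >= 1] *)
    apply router_error_mixing_bound; auto.
    exact (mixing_rate_pos N P pi tstar (proj1 Herg) Hstat Hmix Hlarge).
Qed.
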